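(* Let $(Q,F)$ be a finite ice quiver with $Q_0=\{1,\dots,m\}$, $F_0=\{n+1,\dots,m\}$, whose Euler matrix $\widehat B$ satisfies $\det\widehat B\neq0$, and let $(\widetilde B,\Lambda)$ be its associated compatible pair. If $v\in Q_0\setminus F_0$ is an unfrozen vertex not incident to loops or $2$-cycles, then the Euler matrix of $\mu_v^{\mathrm{FZ}}(Q,F)$ is invertible and $(\mu_v(\widetilde B),\mu_v(\Lambda))$ is the compatible pair associated with $\mu_v^{\mathrm{FZ}}(Q,F)$.
   Context: Euler matrix: $\widehat B=(b_{ij})_{1\le i,j\le m}$ with $b_{ii}=0$ for $i\le n$, $b_{ii}=1$ for $i>n$, and $b_{ij}=\#\{\text{unfrozen arrows } i\to j\}-\#\{\text{arrows } j\to i\}$ for $i\neq j$. The associated compatible pair is $(\widetilde B,\Lambda)$ with $\widetilde B$ the first $n$ columns of $\widehat B$ and $\Lambda=|\det\widehat B|(\widehat B^{-T}-\widehat B^{-1})$. Mutation rules: $\mu_v(\widetilde B)=(b'_{ij})$ with $b'_{ij}=-b_{ij}$ if $i=v$ or $j=v$, and $b'_{ij}=b_{ij}+[b_{iv}]_+[b_{vj}]_+-[-b_{iv}]_+[-b_{vj}]_+$ otherwise ($[x]_+=\max\{x,0\}$). $\mu_v(\Lambda)=(\lambda'_{ij})$ with $\lambda'_{iv}=-\lambda_{iv}+\sum_{l}[b_{lv}]_+\lambda_{il}$ for $i\neq v$, $\lambda'_{vj}=-\lambda_{vj}+\sum_l[b_{lv}]_+\lambda_{lj}$ for $j\neq v$,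 and $\lambda'_{ij}=\lambda_{ij}$ otherwise. Extended Fomin–Zelevinsky mutation $\mu^{\mathrm{FZ}}_v(Q,F)$: (1) for each pair of arrows $\alpha:u\to v$, $\beta:v\to w$ add an unfrozen arrow $u\to w$; (2) reverse every arrow incident to $v$; (3) remove a maximal collection of $2$-cycles consisting of unfrozen arrows; (4) replace each $2$-cycle in a maximal collection of $2$-cycles containing exactly one frozen arrow by a frozen arrow in the direction of the unfrozen arrow of that $2$-cycle. The frozen vertices are unchanged. *)

From HB Require Import structures.
From mathcomp Require Import all_boot all_order all_algebra.
Set Implicit Arguments. Unset Strict Implicit. Unset Printing Implicit Defensive.
Import Order.TTheory GRing.Theory Num.Theory.
Local Open Scope ring_scope.

(* An ice quiver with vertex set 'I_(n+k): vertices 0..n-1 (i.e. lshift k _)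
   are unfrozen, vertices n..n+k-1 (i.e. rshift n _) are frozen.
   Arrows are recorded by multiplicities:
     uarr i j = number of unfrozen arrows i -> j (arrows of Q not in F),
     farr i j = number of frozen arrows i -> j (arrows of F). *)
Record iquiver (n k : nat) := IQuiver {
  uarr : 'I_(n + k) -> 'I_(n + k) -> nat;
  farr : 'I_(n + k) -> 'I_(n + k) -> nat }.

Definition frozen (n k : nat) (i : 'I_(n + k)) : bool := (n <= i)%N.

(* F is a subquiver on the frozen vertices: frozen arrows join frozen vertices. *)
Definition iquiver_wf (n k : nat) (Q : iquiver n k) : Prop :=
  forall i j, (0 < farr Q i j)%N -> frozen i && frozen j.

Definition narr (n k : nat) (Q : iquiver n k) i j : nat := (uarr Q i j + farr Q i j)%N.

Definition euler (n k : nat) (Q : iquiver n k) : 'M[rat]_(n + k) :=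
  \matrix_(i, j) if i == j then (if frozen i then 1 else 0)
                 else (uarr Q i j)%:R - (narr Q j i)%:R.

Definition Btilde (n k : nat) (Q : iquiver n k) : 'M[rat]_(n + k, n) :=
  lsubmx (euler Q : 'M[rat]_(n + k, n + k)).

Definition Lambda (n k : nat) (Q : iquiver n k) : 'M[rat]_(n + k) :=
  `|\det (euler Q)| *: ((invmx (euler Q))^T - invmx (euler Q)).

Definition pos (x : rat) : rat := Num.max x 0.

Definition mutB (n k : nat) (B : 'M[rat]_(n + k, n)) (v : 'I_n) : 'M[rat]_(n + k, n) :=
  \matrix_(i, j)
    if (i == lshift k v) || (j == v) then - B i j
    else B i j + pos (B i v) * pos (B (lshift k v) j)
               - pos (- B i v) * pos (- B (lshift k v) j).

Definition mutL (n k : nat) (B : 'M[rat]_(n + k, n)) (L : 'M[rat]_(n + k)) (v : 'I_n)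
  : 'M[rat]_(n + k) :=
  let vv := lshift k v in
  \matrix_(i, j)
    if (j == vv) && (i != vv) then - L i vv + \sum_l pos (B l v) * L i l
    else if (i == vv) && (j != vv) then - L vv j + \sum_l pos (B l v) * L l j
    else L i j.

Section FZ.
Variables (n k : nat) (Q : iquiver n k) (v : 'I_(n + k)).

Definition U1 i j : nat := (uarr Q i j + narr Q i v * narr Q v j)%N.
Definition U2 i j : nat := if (i == v) || (j == v) then U1 j i else U1 i j.
Definition F2 i j : nat := if (i == v) || (j == v) then farr Q j i else farr Q i j.
(* step 3: remove a maximal collection of unfrozen 2-cycles *)
Definition U3 i j : nat := if i == j then U2 i j else (U2 i j - minn (U2 i j) (U2 j i))%N.
(* step 4: number of 2-cycles (frozen i -> j, unfrozen j -> i) in a maximal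
   collection; each is replaced by a frozen arrow j -> i *)
Definition K4 i j : nat := if i == j then 0%N else minn (F2 i j) (U3 j i).
Definition U4 i j : nat := (U3 i j - K4 j i)%N.
Definition F4 i j : nat := (F2 i j - K4 i j + K4 j i)%N.

Definition mutFZ : iquiver n k := IQuiver U4 F4.
End FZ.

From mathcomp Require Import all_boot all_order all_algebra.
From mathcomp Require Import ring lra zify.
Set Implicit Arguments. Unset Strict Implicit. Unset Printing Implicit Defensive.
Import Order.TTheory GRing.Theory Num.Theory.
Local Open Scope ring_scope.

(* The Fomin-Zelevinsky mutation at an unfrozen vertex v without loops or
   2-cycles acts on the Euler matrix as the congruence B |-> E B E^T, where
   E = 1 + w e_v^T and w = [B_{.v}]_+ - 2 e_v: the hypotheses on v make
   [b_iv]_+ and [-b_iv]_+ the numbers of arrows i -> v and v -> i, and the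
   2-cycles cancelled in steps 3 and 4 contribute 0 to every entry of B.
   As w_v = -2, E is an involution, so the determinant is preserved and
   (E B E^T)^-1 = E^T B^-1 E, whence Lambda |-> E^T Lambda E.
   Expanding entrywise, the first n columns of E B E^T are mu_v(B~), and
   E^T L E is mu_v(L) for every skew-symmetric L. *)

Lemma posE_ge0 (x : rat) : 0 <= x -> pos x = x.
Proof. by move=> x_ge0; apply/max_idPl. Qed.

Lemma posNE_ge0 (x : rat) : 0 <= x -> pos (- x) = 0.
Proof. by move=> x_ge0; apply/max_idPr; rewrite oppr_le0. Qed.

Lemma pos0 : pos 0 = 0.
Proof. exact: posE_ge0. Qed.

Lemma pos_subN (x : rat) : pos x - pos (- x) = x.
Proof.
have [x_ge0|x_lt0] := lerP 0 x; first by rewrite posE_ge0 // posNE_ge0 // subr0.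
by rewrite [pos (- x)]posE_ge0 ?oppr_ge0 ?ltW // /pos (max_idPr (ltW x_lt0)) sub0r opprK.
Qed.

Lemma pos_mul_addN (x y : rat) :
  pos x * y + x * pos (- y) = pos x * pos y - pos (- x) * pos (- y).
Proof. by rewrite -{1}[y]pos_subN -{2}[x]pos_subN; ring. Qed.

Lemma skew_mx_diag0 (R : numDomainType) m (M : 'M[R]_m) i :
  M^T = - M -> M i i = 0.
Proof.
move=> skewM; apply/eqP; rewrite -eqNr.
by have := congr1 (fun A : 'M_m => A i i) skewM; rewrite !mxE => <-.
Qed.

Section Reflection.
Variables (R : comUnitRingType) (m : nat) (v : 'I_m) (w : 'cV[R]_m).

Definition reflection : 'M[R]_m := 1%:M + w *m delta_mx 0 v.
Local Notation E := reflection.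

Lemma reflection_mulmxE p (M : 'M[R]_(m, p)) i j :
  (E *m M) i j = M i j + w i 0 * M v j.
Proof. by rewrite /E mulmxDl mul1mx -mulmxA -rowE !mxE big_ord1 !mxE. Qed.

Lemma mulmx_reflectionE p (M : 'M[R]_(p, m)) i j :
  (M *m E) i j = M i j + (M *m w) i 0 * (j == v)%:R.
Proof. by rewrite /E mulmxDr mulmx1 mulmxA !mxE big_ord1 !mxE eqxx. Qed.

Lemma trmx_reflection_mulmxE p (M : 'M[R]_(m, p)) i j :
  (E^T *m M) i j = M i j + (i == v)%:R * (w^T *m M) 0 j.
Proof.
rewrite /E linearD /= trmx1 trmx_mul mulmxDl mul1mx -mulmxA trmx_delta.
by rewrite !mxE big_ord1 !mxE eqxx andbT.
Qed.

Lemma mulmx_trmx_reflectionE p (M : 'M[R]_(p, m)) i j :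
  (M *m E^T) i j = M i j + M i v * w j 0.
Proof.
rewrite /E linearD /= trmx1 trmx_mul mulmxDr mulmx1 mulmxA trmx_delta -colE.
by rewrite !mxE big_ord1 !mxE.
Qed.

Hypothesis w_v : w v 0 = - 2%:R.

Lemma reflectionK : E *m E = 1%:M.
Proof.
have rw : delta_mx 0 v *m w = (- 2%:R)%:M.
  by apply/matrixP => a b; rewrite !ord1 -rowE [row _ _ _ _]mxE w_v mxE eqxx.
rewrite /E mulmxDl mul1mx mulmxDr mulmx1 -!mulmxA (mulmxA _ w) rw.
rewrite mul_scalar_mx -scalemxAr.
by apply/matrixP => a b; rewrite !mxE; ring.
Qed.

Lemma det_reflection_congr (M : 'M[R]_m) : \det (E *m M *m E^T) = \det M.
Proof. by rewrite !det_mulmx det_tr mulrC mulrA -det_mulmx reflectionK det1 mul1r. Qed.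

Lemma invmx_reflection_congr (M : 'M[R]_m) : M \in unitmx ->
  invmx (E *m M *m E^T) = E^T *m invmx M *m E.
Proof.
move=> unitM.
have unitEME : E *m M *m E^T \in unitmx by rewrite unitmxE det_reflection_congr.
have leftinv : E^T *m invmx M *m E *m (E *m M *m E^T) = 1%:M.
  rewrite !mulmxA -(mulmxA _ E E) reflectionK mulmx1 -(mulmxA _ (invmx M)).
  by rewrite mulVmx // mulmx1 -trmx_mul reflectionK trmx1.
by rewrite -[LHS]mul1mx -leftinv -(mulmxA (E^T *m _ *m E)) mulmxV // mulmx1.
Qed.

End Reflection.

Lemma lsubmxE (R : Type) m n1 n2 (A : 'M[R]_(m, n1 + n2)) i j :
  lsubmx A i j = A i (lshift n2 j).
Proof. by rewrite mxE. Qed.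

Lemma mutFZ_2cycle_balance n k (Q : iquiver n k) x i j : i != j ->
  (U4 Q x i j + (U2 Q x j i + F2 Q x j i)
   = U2 Q x i j + (U4 Q x j i + F4 Q x j i))%N.
Proof.
move=> neq_ij; rewrite /F4 /U4 /K4 /U3 (negbTE neq_ij) eq_sym (negbTE neq_ij).
move: (U2 Q x i j) (U2 Q x j i) (F2 Q x i j) (F2 Q x j i); lia.
Qed.

Lemma euler_mutFZ_offdiag n k (Q : iquiver n k) x i j : i != j ->
  euler (mutFZ Q x) i j = (U2 Q x i j)%:R - (U2 Q x j i + F2 Q x j i)%:R.
Proof.
move=> neq_ij; rewrite mxE (negbTE neq_ij) /narr /=.
have := congr1 (fun a => a%:R : rat) (mutFZ_2cycle_balance Q x neq_ij).
by rewrite !natrD; lra.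
Qed.

Lemma Lambda_skew n k (Q : iquiver n k) : (Lambda Q)^T = - Lambda Q.
Proof. by rewrite /Lambda linearZ /= linearB /= trmxK -scalerN opprB. Qed.

Section Mutation.
Variables (n k : nat) (Q : iquiver n k) (v : 'I_n).
Hypothesis wfQ : iquiver_wf Q.
Local Notation vv := (lshift k v).
Local Notation B := (euler Q).

Lemma unfrozen_lshift : frozen vv = false.
Proof. by rewrite /frozen /= leqNgt ltn_ord. Qed.

Lemma farr_lshiftl x : farr Q vv x = 0%N.
Proof. by case: (posnP (farr Q vv x)) => // /wfQ /andP[]; rewrite unfrozen_lshift. Qed.

Lemma farr_lshiftr x : farr Q x vv = 0%N.
Proof. by case: (posnP (farr Q x vv)) => // /wfQ /andP[_]; rewrite unfrozen_lshift. Qed.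

Lemma euler_vv : B vv vv = 0.
Proof. by rewrite mxE eqxx unfrozen_lshift. Qed.

Lemma euler_col_v i : i != vv -> B i vv = (uarr Q i vv)%:R - (uarr Q vv i)%:R.
Proof. by move=> neq_iv; rewrite mxE (negbTE neq_iv) /narr farr_lshiftl addn0. Qed.

Lemma euler_skew_v i : B i vv = - B vv i.
Proof.
have [->|neq_iv] := eqVneq i vv; first by rewrite euler_vv oppr0.
by rewrite euler_col_v // mxE eq_sym (negbTE neq_iv) /narr farr_lshiftr addn0 opprB.
Qed.

Definition mutation_col : 'cV[rat]_(n + k) :=
  \col_i pos (B i vv) - 2%:R *: (delta_mx 0 vv)^T.
Local Notation E := (reflection vv mutation_col).

Lemma mutation_colE i : mutation_col i 0 = pos (B i vv) - 2%:R * (i == vv)%:R.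
Proof. by rewrite !mxE eqxx. Qed.

Lemma mutation_col_v : mutation_col vv 0 = - 2%:R.
Proof. by rewrite mutation_colE euler_vv pos0 eqxx mulr1 sub0r. Qed.

Lemma mutB_reflection : mutB (Btilde Q) v = lsubmx (E *m B *m E^T).
Proof.
apply/matrixP => i j; rewrite [LHS]mxE !lsubmxE.
rewrite mulmx_trmx_reflectionE !reflection_mulmxE !mutation_colE (inj_eq (@lshift_inj _ _)).
have [->|neq_iv] /= := eqVneq i vv; first by rewrite euler_vv pos0; ring.
have [->|neq_jv] /= := eqVneq j v; first by rewrite euler_vv pos0; ring.
by rewrite euler_vv (euler_skew_v (lshift k j)) -addrA -pos_mul_addN; ring.
Qed.

Lemma mulmx_mutation_colE (L : 'M[rat]_(n + k)) i :
  (L *m mutation_col) i 0 = \sum_l pos (B l vv) * L i l - 2%:R * L i vv.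
Proof.
rewrite mulmxBr -scalemxAr trmx_delta -colE !mxE.
by congr (_ - _); apply: eq_bigr => l _; rewrite mxE mulrC.
Qed.

Lemma trmx_mutation_col_mulmxE (L : 'M[rat]_(n + k)) j :
  (mutation_col^T *m L) 0 j = \sum_l pos (B l vv) * L l j - 2%:R * L vv j.
Proof.
rewrite linearB /= linearZ /= trmxK mulmxBl -scalemxAl -rowE !mxE.
by congr (_ - _); apply: eq_bigr => l _; rewrite !mxE.
Qed.

Lemma mutL_reflection (L : 'M[rat]_(n + k)) :
  L^T = - L -> mutL (Btilde Q) L v = E^T *m L *m E.
Proof.
move=> skewL; apply/matrixP => i j; rewrite [LHS]mxE.
under eq_bigr do rewrite lsubmxE.
under [\sum_l _ * L l j]eq_bigr do rewrite lsubmxE.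
have [->|neq_iv] := eqVneq i vv.
  have [->|neq_jv] := eqVneq j vv.
    rewrite /= (skew_mx_diag0 vv skewL) (skew_mx_diag0 vv) //.
    by rewrite !trmx_mul trmxK skewL mulNmx mulmxN mulmxA.
  rewrite /= mulmx_reflectionE trmx_reflection_mulmxE eqxx (negbTE neq_jv).
  by rewrite trmx_mutation_col_mulmxE /= mul1r mulr0; ring.
rewrite /= -mulmxA trmx_reflection_mulmxE mulmx_reflectionE.
rewrite (negbTE neq_iv) mul0r addr0 mulmx_mutation_colE.
by have [->|neq_jv] /= := eqVneq j vv; ring.
Qed.

Section NoLoopsNo2Cycles.
Hypothesis noloop : narr Q vv vv = 0%N.
Hypothesis no2cycle :
  forall u, u != vv -> narr Q u vv = 0%N \/ narr Q vv u = 0%N.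

Lemma uarr_no2cycle u : u != vv -> uarr Q u vv = 0%N \/ uarr Q vv u = 0%N.
Proof. by move/no2cycle; rewrite /narr farr_lshiftl farr_lshiftr !addn0. Qed.

Lemma pos_euler_col_v i : i != vv -> pos (B i vv) = (uarr Q i vv)%:R.
Proof.
move=> neq_iv; rewrite euler_col_v //.
by case: (uarr_no2cycle neq_iv) => ->;
  rewrite mulr0n ?subr0 ?sub0r ?posNE_ge0 ?posE_ge0 ?ler0n.
Qed.

Lemma euler_mutFZ : euler (mutFZ Q vv) = E *m B *m E^T.
Proof.
apply/matrixP => i j.
rewrite mulmx_trmx_reflectionE !reflection_mulmxE !mutation_colE euler_vv.
have [->|neq_ij] := eqVneq i j.
  by rewrite [LHS]mxE [B j j]mxE eqxx (euler_skew_v j); ring.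
have noloopu : uarr Q vv vv = 0%N by move: noloop; rewrite /narr farr_lshiftl addn0.
rewrite euler_mutFZ_offdiag // /U2 /F2 /U1 /narr.
case: (eqVneq i vv) neq_ij => [->|neq_iv] neq_ij.
  have neq_jv : j != vv by rewrite eq_sym.
  rewrite orbT /= !farr_lshiftl !farr_lshiftr noloopu !(muln0, addn0).
  by rewrite -euler_col_v // euler_skew_v euler_vv pos0; ring.
case: (eqVneq j vv) neq_ij => [->|neq_jv] neq_ij.
  rewrite orbT /= !farr_lshiftl !farr_lshiftr noloopu !(mul0n, muln0, addn0).
  by rewrite -opprB -euler_col_v // euler_vv pos0; ring.
rewrite /= !farr_lshiftl !farr_lshiftr !addn0.
rewrite !pos_euler_col_v // -[B vv j]opprK -euler_skew_v !euler_col_v //.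
by rewrite mxE (negbTE neq_ij) /narr !natrD !natrM; ring.
Qed.

Lemma Lambda_mutFZ : \det B != 0 -> Lambda (mutFZ Q vv) = E^T *m Lambda Q *m E.
Proof.
move=> detB_neq0.
have unitB : B \in unitmx by rewrite unitmxE unitfE.
rewrite /Lambda euler_mutFZ det_reflection_congr ?mutation_col_v //.
rewrite invmx_reflection_congr ?mutation_col_v // !trmx_mul trmxK mulmxA.
by rewrite -scalemxAr -scalemxAl mulmxBr mulmxBl.
Qed.

End NoLoopsNo2Cycles.
End Mutation.

Theorem proposition4p3 (n k : nat) (Q : iquiver n k) (v : 'I_n) :
  iquiver_wf Q ->
  \det (euler Q) != 0 ->
  narr Q (lshift k v) (lshift k v) = 0%N ->
  (forall u, u != lshift k v ->
     narr Q u (lshift k v) = 0%N \/ narr Q (lshift k v) u = 0%N) ->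
  \det (euler (mutFZ Q (lshift k v))) != 0
  /\ mutB (Btilde Q) v = Btilde (mutFZ Q (lshift k v))
  /\ mutL (Btilde Q) (Lambda Q) v = Lambda (mutFZ Q (lshift k v)).
Proof.
move=> wfQ detB_neq0 noloop no2cycle.
have eulerE := euler_mutFZ wfQ noloop no2cycle.
split; first by rewrite eulerE det_reflection_congr // mutation_col_v.
split; first by rewrite mutB_reflection // /Btilde eulerE.
by rewrite Lambda_mutFZ // mutL_reflection // Lambda_skew.
Qed.
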